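(* Let $\mathcal{X}\subseteq\mathbb{R}^d$ be a nonempty closed convex bounded set with $R\ge\max_{x,y\in\mathcal{X}}\|x-y\|$, and consider the iterates $x_t,z_t$ and step sizes $\gamma_t$ of Algorithm AdaPEG (described in the context) run with arbitrary oracle answers $\widehat{F(x_t)}\in\mathbb{R}^d$. Then for all $y\in\mathcal{X}$, \[\sum_{t=1}^T\langle\widehat{F(x_t)},x_t-y\rangle\le\frac12R^2\gamma_0+\left(\frac12\frac{R^2}{\eta}+2\eta\right)\sqrt{\sum_{t=1}^T\left\|\widehat{F(x_t)}-\widehat{F(x_{t-1})}\right\|^2}-\frac12\sum_{t=1}^T\gamma_{t-1}\left(\|x_t-z_{t-1}\|^2+\|x_{t-1}-z_{t-1}\|^2\right).\]
   Context: $\|\cdot\|$ is the Euclidean norm. Algorithm AdaPEG: $x_0=z_0\in\mathcal{X}$, $\gamma_0\ge0$, $\eta>0$. For $t=1,\dots,T$: $x_t=\arg\min_{u\in\mathcal{X}}\{\langle\widehat{F(x_{t-1})},u\rangle+\tfrac12\gamma_{t-1}\|u-z_{t-1}\|^2\}$; $\gamma_t=\frac1\eta\sqrt{\eta^2\gamma_0^2+\sum_{s=1}^t\|\widehat{F(x_s)}-\widehat{F(x_{s-1})}\|^2}$; $z_t=\arg\min_{u\in\mathcal{X}}\{\langle\widehat{F(x_t)},u\rangle+\tfrac12\gamma_{t-1}\|u-z_{t-1}\|^2+\tfrac12(\gamma_t-\gamma_{t-1})\|u-x_t\|^2\}$. *)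

(* vectors of R^d are row vectors 'rV[R]_d over R : realType. *)
From HB Require Import structures.
From mathcomp Require Import all_boot all_order all_algebra.
From mathcomp Require Import all_classical all_reals all_analysis.
Set Implicit Arguments. Unset Strict Implicit. Unset Printing Implicit Defensive.
Import Order.TTheory GRing.Theory Num.Theory.
Import numFieldNormedType.Exports.
Local Open Scope classical_set_scope.
Local Open Scope ring_scope.

Definition dotv {R : realType} {d : nat} (u v : 'rV[R]_d) : R :=
  \sum_(i < d) u ord0 i * v ord0 i.
Definition enorm {R : realType} {d : nat} (u : 'rV[R]_d) : R :=
  Num.sqrt (dotv u u).

Definition convex_setX {R : realType} {d : nat} (X : set 'rV[R]_d) : Prop :=
  forall x y (l : R), X x -> X y -> 0 <= l -> l <= 1 ->
    X (l *: x + (1 - l) *: y).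

Definition is_argmin {R : realType} {d : nat} (X : set 'rV[R]_d)
  (f : 'rV[R]_d -> R) (x : 'rV[R]_d) : Prop :=
  X x /\ forall u, X u -> f x <= f u.

(* AdaPEG step sizes: g t is the oracle answer \widehat{F(x_t)};
   gamma_t = (1/eta) sqrt(eta^2 gamma_0^2 + sum_{s=1}^t ||g s - g (s-1)||^2).
   (For t = 0 this equals gamma_0 when gamma_0 >= 0.) *)
Definition adapeg_gamma {R : realType} {d : nat} (eta gamma0 : R)
  (g : nat -> 'rV[R]_d) (t : nat) : R :=
  if t is 0%N then gamma0 else
  eta^-1 * Num.sqrt (eta ^+ 2 * gamma0 ^+ 2
     + \sum_(1 <= s < t.+1) enorm (g s - g s.-1) ^+ 2).

Definition adapeg_run {R : realType} {d : nat} (X : set 'rV[R]_d)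
  (eta gamma0 : R) (T : nat) (g : nat -> 'rV[R]_d) (x z : nat -> 'rV[R]_d) : Prop :=
  let gam := adapeg_gamma eta gamma0 g in
  x 0%N = z 0%N /\ X (x 0%N) /\
  forall t, (1 <= t <= T)%N ->
    is_argmin X (fun u => dotv (g t.-1) u + 2^-1 * gam t.-1 * enorm (u - z t.-1) ^+ 2) (x t)
    /\ is_argmin X (fun u => dotv (g t) u + 2^-1 * gam t.-1 * enorm (u - z t.-1) ^+ 2
                           + 2^-1 * (gam t - gam t.-1) * enorm (u - x t) ^+ 2) (z t).

From HB Require Import structures.
From mathcomp Require Import all_boot all_order all_algebra.
From mathcomp Require Import all_classical all_reals all_analysis.
From mathcomp Require Import ring lra.
Import Order.TTheory GRing.Theory Num.Theory.
Import numFieldNormedType.Exports.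
Local Open Scope classical_set_scope.
Local Open Scope ring_scope.

(** The iterates x_t and z_t are proximal steps, so their first-order
    optimality conditions, rewritten with the three-point identity, bound
    <g_t, x_t - y> by a telescoping difference of the gamma-weighted squared
    distances from y to z_{t-1} and z_t, plus (gamma_t - gamma_{t-1}) R^2 / 2
    for the growth of the step size, plus the prediction error
    <g_t - g_{t-1}, x_t - z_t>.  The same conditions give
    gamma_t <g_t - g_{t-1}, x_t - z_t> <= ||g_t - g_{t-1}||^2
    = eta^2 (gamma_t^2 - gamma_{t-1}^2), so the prediction error is at most
    2 eta^2 (gamma_t - gamma_{t-1}).  Summing, everything telescopes to
    (gamma_T - gamma_0) (R^2 / 2 + 2 eta^2), and by the definition of the
    step sizes eta (gamma_T - gamma_0) <= sqrt (sum_t ||g_t - g_{t-1}||^2). *)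

Section EuclideanInnerProduct.
Context {R : realType} {d : nat}.
Implicit Types (u v w : 'rV[R]_d) (k : R).

Lemma dotvC u v : dotv u v = dotv v u.
Proof. by apply: eq_bigr => i _; rewrite mulrC. Qed.

Lemma dotvDl u v w : dotv (u + v) w = dotv u w + dotv v w.
Proof. by rewrite /dotv -big_split; apply: eq_bigr => i _; rewrite mxE mulrDl. Qed.

Lemma dotvZl k u w : dotv (k *: u) w = k * dotv u w.
Proof. by rewrite /dotv mulr_sumr; apply: eq_bigr => i _; rewrite mxE mulrA. Qed.

Lemma dotvNl u w : dotv (- u) w = - dotv u w.
Proof. by rewrite -scaleN1r dotvZl mulN1r. Qed.

Lemma dotvBl u v w : dotv (u - v) w = dotv u w - dotv v w.
Proof. by rewrite dotvDl dotvNl. Qed.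

Lemma dotvDr u v w : dotv w (u + v) = dotv w u + dotv w v.
Proof. by rewrite dotvC dotvDl !(dotvC w). Qed.

Lemma dotvZr k u w : dotv w (k *: u) = k * dotv w u.
Proof. by rewrite dotvC dotvZl dotvC. Qed.

Lemma dotvBr u v w : dotv w (u - v) = dotv w u - dotv w v.
Proof. by rewrite dotvC dotvBl !(dotvC w). Qed.

Lemma dotv0l u : dotv 0 u = 0.
Proof. by rewrite -(scale0r 0) dotvZl mul0r. Qed.

Lemma dotvv_ge0 u : 0 <= dotv u u.
Proof. by apply: sumr_ge0 => i _; rewrite -expr2 sqr_ge0. Qed.

Lemma dotvv_eq0 u : (dotv u u == 0) = (u == 0).
Proof.
apply/eqP/eqP => [uu0|->]; last exact: dotv0l.
apply/rowP => i; rewrite mxE.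
have uu_ge0 j : true -> 0 <= u ord0 j * u ord0 j by rewrite -expr2 sqr_ge0.
have /eqP := psumr_eq0P uu_ge0 uu0 (i := i) isT.
by rewrite mulf_eq0 orbb => /eqP; rewrite [ord0]ord1.
Qed.

Lemma sqr_enorm u : enorm u ^+ 2 = dotv u u.
Proof. by rewrite sqr_sqrtr // dotvv_ge0. Qed.

Lemma enorm_ge0 u : 0 <= enorm u.
Proof. exact: sqrtr_ge0. Qed.

Lemma enorm0 : enorm (0 : 'rV[R]_d) = 0.
Proof. by rewrite /enorm dotv0l sqrtr0. Qed.

Lemma enormN u : enorm (- u) = enorm u.
Proof. by rewrite /enorm dotvNl dotvC dotvNl opprK. Qed.

Lemma enorm_distC u v : enorm (u - v) = enorm (v - u).
Proof. by rewrite -enormN opprB. Qed.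

Lemma sqr_enormD u v :
  enorm (u + v) ^+ 2 = enorm u ^+ 2 + 2 * dotv u v + enorm v ^+ 2.
Proof. by rewrite !sqr_enorm dotvDl !dotvDr (dotvC v u); ring. Qed.

Lemma sqr_enormZ k u : enorm (k *: u) ^+ 2 = k ^+ 2 * enorm u ^+ 2.
Proof. by rewrite !sqr_enorm dotvZl dotvZr mulrA -expr2. Qed.

Lemma dotv_three_point m p u :
  dotv (m - p) (u - m)
  = 2^-1 * (enorm (u - p) ^+ 2 - enorm (u - m) ^+ 2 - enorm (m - p) ^+ 2).
Proof.
have -> : u - p = (u - m) + (m - p) by rewrite addrA subrK.
by rewrite sqr_enormD (dotvC (u - m)); field.
Qed.

(* 0 <= |w - k v|^2 gives k <w, v> <= |w|^2; when k = 0 the bound forces w = 0. *)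
Lemma dotv_le_of_coercive {k c} w v :
  0 <= k -> 0 <= c -> k * enorm v ^+ 2 <= dotv w v -> enorm w ^+ 2 <= k * c ->
  dotv w v <= c.
Proof.
move=> k_ge0 c_ge0 coer w_le.
have kwv_le : k * dotv w v <= enorm w ^+ 2.
  have := sqr_ge0 (enorm (w + (- k) *: v)).
  rewrite sqr_enormD sqr_enormZ dotvZr sqrrN.
  have : 0 <= k * (dotv w v - k * enorm v ^+ 2) by rewrite mulr_ge0 ?subr_ge0.
  lra.
have [k0|k_neq0] := eqVneq k 0.
  move: w_le; rewrite k0 mul0r => w_le.
  have /eqP : dotv w w = 0 by rewrite -sqr_enorm; apply/eqP; rewrite eq_le w_le sqr_ge0.
  by rewrite dotvv_eq0 => /eqP ->; rewrite dotv0l.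
have k_gt0 : 0 < k by rewrite lt_def k_neq0.
by rewrite -(ler_pM2l k_gt0); lra.
Qed.

End EuclideanInnerProduct.

Lemma slope_ge0_of_quadratic_ge0 {R : realFieldType} (L Q : R) :
  (forall l, 0 < l -> l <= 1 -> 0 <= l * L + l ^+ 2 * Q) -> 0 <= L.
Proof.
move=> quad_ge0; rewrite leNgt; apply/negP => L_lt0.
have QL_gt0 : 0 < `|Q| - L by have := normr_ge0 Q; lra.
pose l := - L / (`|Q| - L).
have l_gt0 : 0 < l by rewrite divr_gt0 // oppr_gt0.
have l_le1 : l <= 1 by rewrite ler_pdivrMr // mul1r; have := normr_ge0 Q; lra.
have lQL : l * (`|Q| - L) = - L by rewrite divfK // gt_eqF.
have Q_le : l ^+ 2 * Q <= l ^+ 2 * `|Q| by rewrite ler_wpM2l ?sqr_ge0 ?ler_norm.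
have := quad_ge0 l l_gt0 l_le1.
have : 0 < l * l * - L.
  by apply: mulr_gt0; [apply: mulr_gt0 | rewrite oppr_gt0].
rewrite expr2 in Q_le *; nra.
Qed.

Section ProximalOptimality.
Context {R : realType} {d : nat}.
Implicit Types (X : set 'rV[R]_d) (a b p q x y z : 'rV[R]_d).

Lemma argmin_first_order {X f m} G (Q : 'rV[R]_d -> R) :
  convex_setX X -> is_argmin X f m ->
  (forall v l, f (m + l *: v) = f m + l * dotv G v + l ^+ 2 * Q v) ->
  forall u, X u -> 0 <= dotv G (u - m).
Proof.
move=> convX [Xm m_min] f_line u Xu.
apply: (@slope_ge0_of_quadratic_ge0 _ _ (Q (u - m))) => l l_gt0 l_le1.
have := m_min _ (convX u m l Xu Xm (ltW l_gt0) l_le1).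
have -> : l *: u + (1 - l) *: m = m + l *: (u - m).
  by rewrite scalerBl scale1r scalerBr addrCA.
by rewrite f_line; lra.
Qed.

Lemma prox_argmin_first_order {X f a p q} {c c' : R} {m} :
  convex_setX X ->
  f =1 (fun u => dotv a u + 2^-1 * c * enorm (u - p) ^+ 2
                          + 2^-1 * c' * enorm (u - q) ^+ 2) ->
  is_argmin X f m ->
  forall u, X u -> 0 <= dotv (a + c *: (m - p) + c' *: (m - q)) (u - m).
Proof.
move=> convX fE m_min.
apply: (argmin_first_order _ (fun v => 2^-1 * (c + c') * enorm v ^+ 2) convX m_min)
  => v l.
have shift r : m + l *: v - r = (m - r) + l *: v by rewrite addrAC.
rewrite !fE !shift (sqr_enormD (m - p)) (sqr_enormD (m - q)) sqr_enormZ.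
rewrite dotvDr (dotvDl _ (c' *: _)) (dotvDl a) !dotvZl !dotvZr.
by field.
Qed.

Lemma optimistic_step_le {X a b zp x z y} {gp gm : R} :
  (forall u, X u -> 0 <= dotv (a + gp *: (x - zp)) (u - x)) ->
  (forall u, X u -> 0 <= dotv (b + gp *: (z - zp) + (gm - gp) *: (z - x)) (u - z)) ->
  X z -> X y ->
  dotv b (x - y)
  <= 2^-1 * gp * enorm (y - zp) ^+ 2 - 2^-1 * gm * enorm (y - z) ^+ 2
     + 2^-1 * (gm - gp) * enorm (y - x) ^+ 2 - 2^-1 * gm * enorm (x - z) ^+ 2
     - 2^-1 * gp * enorm (x - zp) ^+ 2 + dotv (b - a) (x - z).
Proof.
move=> x_opt z_opt Xz Xy.
have := x_opt z Xz; have := z_opt y Xy.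
rewrite !dotvDl !dotvZl !dotv_three_point (enorm_distC z x) !dotvBr !dotvNl.
lra.
Qed.

Lemma optimistic_gap_le {X a b zp x z} {gp gm c : R} :
  (forall u, X u -> 0 <= dotv (a + gp *: (x - zp)) (u - x)) ->
  (forall u, X u -> 0 <= dotv (b + gp *: (z - zp) + (gm - gp) *: (z - x)) (u - z)) ->
  X x -> X z -> 0 <= gm -> 0 <= c -> enorm (b - a) ^+ 2 <= gm * c ->
  dotv (b - a) (x - z) <= c.
Proof.
move=> x_opt z_opt Xx Xz gm_ge0 c_ge0 ba_le.
apply: (dotv_le_of_coercive _ _ gm_ge0 c_ge0) => //.
have := x_opt z Xz; have := z_opt x Xx.
rewrite !dotvDl !dotvZl !dotv_three_point subrr enorm0 (enorm_distC z x).
rewrite !dotvBr !dotvNl expr0n /=.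
lra.
Qed.

End ProximalOptimality.

Section AdaptiveStepSize.
Context {R : realType} {d : nat} (eta gamma0 : R) (g : nat -> 'rV[R]_d).
Hypotheses (eta_gt0 : 0 < eta) (gamma0_ge0 : 0 <= gamma0).

Local Notation gam := (adapeg_gamma eta gamma0 g).
Local Notation gdiff_sum t := (\sum_(1 <= s < t.+1) enorm (g s - g s.-1) ^+ 2).

Lemma adapeg_gamma_ge0 t : 0 <= gam t.
Proof. by case: t => // t; rewrite mulr_ge0 ?invr_ge0 ?sqrtr_ge0 ?(ltW eta_gt0). Qed.

Lemma sqr_eta_adapeg_gamma t : (eta * gam t) ^+ 2 = (eta * gamma0) ^+ 2 + gdiff_sum t.
Proof.
case: t => [|t]; first by rewrite big_geq // addr0.
rewrite /= mulrA divff ?gt_eqF // mul1r exprMn sqr_sqrtr //.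
by apply: addr_ge0; [rewrite mulr_ge0 ?sqr_ge0 | apply: sumr_ge0 => s _; rewrite sqr_ge0].
Qed.

Lemma adapeg_gamma_leS t : gam t <= gam t.+1.
Proof.
have eta_gam_ge0 s : eta * gam s \in Num.nneg.
  by rewrite nnegrE mulr_ge0 ?adapeg_gamma_ge0 ?ltW.
rewrite -(ler_pM2l eta_gt0) -(ler_pXn2r (n := 2)) // !sqr_eta_adapeg_gamma.
by rewrite [X in _ <= _ + X]big_nat_recr //= addrA lerDl sqr_ge0.
Qed.

Lemma sqr_enorm_gdiff_le t :
  enorm (g t.+1 - g t) ^+ 2 <= gam t.+1 * (2 * eta ^+ 2 * (gam t.+1 - gam t)).
Proof.
have gdiffE : enorm (g t.+1 - g t) ^+ 2 = (eta * gam t.+1) ^+ 2 - (eta * gam t) ^+ 2.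
  by rewrite !sqr_eta_adapeg_gamma big_nat_recr //=; ring.
have := adapeg_gamma_ge0 t; have := adapeg_gamma_leS t.
have : 0 <= eta ^+ 2 * (gam t.+1 - gam t) ^+ 2 by rewrite mulr_ge0 ?sqr_ge0.
rewrite gdiffE; nra.
Qed.

Lemma adapeg_gamma_sub_le t : gam t - gamma0 <= Num.sqrt (gdiff_sum t) / eta.
Proof.
have sum_ge0 : 0 <= gdiff_sum t by rewrite sumr_ge0 // => s _; rewrite sqr_ge0.
have sqrt_ge0 := sqrtr_ge0 (gdiff_sum t).
have eta_gam_le : eta * gam t <= eta * gamma0 + Num.sqrt (gdiff_sum t).
  rewrite -(ler_pXn2r (n := 2)) ?nnegrE ?addr_ge0 ?mulr_ge0 ?adapeg_gamma_ge0
    ?(ltW eta_gt0) //.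
  rewrite sqr_eta_adapeg_gamma sqrrD sqr_sqrtr //.
  have : 0 <= eta * gamma0 * Num.sqrt (gdiff_sum t).
    by rewrite mulr_ge0 ?mulr_ge0 ?(ltW eta_gt0).
  lra.
by rewrite ler_pdivlMr //; lra.
Qed.

End AdaptiveStepSize.

Section AdaPEG.
Context {R : realType} {d : nat} {X : set 'rV[R]_d} {diam eta gamma0 : R} {T : nat}
  {g x z : nat -> 'rV[R]_d}.
Hypotheses (convX : convex_setX X)
  (diamX : forall a b, X a -> X b -> enorm (a - b) <= diam)
  (gamma0_ge0 : 0 <= gamma0) (eta_gt0 : 0 < eta)
  (run : adapeg_run X eta gamma0 T g x z).

Local Notation gam := (adapeg_gamma eta gamma0 g).

Lemma sqr_enorm_le_diam a b : X a -> X b -> enorm (a - b) ^+ 2 <= diam ^+ 2.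
Proof.
move=> Xa Xb; have ab_le := diamX _ _ Xa Xb.
by rewrite lerXn2r ?nnegrE ?enorm_ge0 // (le_trans (enorm_ge0 _) ab_le).
Qed.

Lemma adapeg_iterates_in t : (t <= T)%N -> X (x t) /\ X (z t).
Proof.
case: t => [_|t tT]; first by rewrite -run.1; split; exact: run.2.1.
by have [[Xx _] [Xz _]] := run.2.2 t.+1 tT.
Qed.

Lemma adapeg_x_first_order t : (t < T)%N -> forall u, X u ->
  0 <= dotv (g t + gam t *: (x t.+1 - z t)) (u - x t.+1).
Proof.
move=> tT; have [x_min _] := run.2.2 t.+1 tT.
rewrite -[g t + _]addr0 -(scale0r (x t.+1 - z t)).
by apply: (prox_argmin_first_order convX _ x_min) => u; rewrite mulr0 mul0r addr0.
Qed.

Lemma adapeg_z_first_order t : (t < T)%N -> forall u, X u ->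
  0 <= dotv (g t.+1 + gam t *: (z t.+1 - z t) + (gam t.+1 - gam t) *: (z t.+1 - x t.+1))
            (u - z t.+1).
Proof.
move=> tT; have [_ z_min] := run.2.2 t.+1 tT.
exact: (prox_argmin_first_order convX _ z_min).
Qed.

Variables (y : 'rV[R]_d) (Xy : X y).

Lemma adapeg_step_le t : (t < T)%N ->
  dotv (g t.+1) (x t.+1 - y)
  <= 2^-1 * gam t * enorm (y - z t) ^+ 2 - 2^-1 * gam t.+1 * enorm (y - z t.+1) ^+ 2
     + (gam t.+1 - gam t) * (2^-1 * diam ^+ 2 + 2 * eta ^+ 2)
     - 2^-1 * gam t.+1 * enorm (x t.+1 - z t.+1) ^+ 2
     - 2^-1 * gam t * enorm (x t.+1 - z t) ^+ 2.
Proof.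
move=> tT; have [Xx Xz] := adapeg_iterates_in _ tT.
have x_opt := adapeg_x_first_order _ tT; have z_opt := adapeg_z_first_order _ tT.
have gam_le := adapeg_gamma_leS eta gamma0 g eta_gt0 gamma0_ge0 t.
have c_ge0 : 0 <= 2 * eta ^+ 2 * (gam t.+1 - gam t).
  by apply: mulr_ge0; [rewrite mulr_ge0 ?sqr_ge0 | rewrite subr_ge0].
have gap_le := optimistic_gap_le x_opt z_opt Xx Xz
  (adapeg_gamma_ge0 eta gamma0 g eta_gt0 gamma0_ge0 t.+1) c_ge0
  (sqr_enorm_gdiff_le eta gamma0 g eta_gt0 gamma0_ge0 t).
have yx_le : (gam t.+1 - gam t) * enorm (y - x t.+1) ^+ 2
             <= (gam t.+1 - gam t) * diam ^+ 2.
  by rewrite ler_wpM2l ?subr_ge0 ?sqr_enorm_le_diam.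
have := optimistic_step_le x_opt z_opt Xz Xy.
lra.
Qed.

Lemma adapeg_regret_le n : (n <= T)%N ->
  \sum_(1 <= t < n.+1) dotv (g t) (x t - y)
  <= 2^-1 * gamma0 * enorm (y - z 0%N) ^+ 2 - 2^-1 * gam n * enorm (y - z n) ^+ 2
     + (gam n - gamma0) * (2^-1 * diam ^+ 2 + 2 * eta ^+ 2)
     - 2^-1 * gam n * enorm (x n - z n) ^+ 2
     - 2^-1 * \sum_(1 <= t < n.+1) gam t.-1
                 * (enorm (x t - z t.-1) ^+ 2 + enorm (x t.-1 - z t.-1) ^+ 2).
Proof.
have gam0 : gam 0%N = gamma0 by [].
elim: n => [_|n IHn nT].
  by rewrite !big_geq // gam0 run.1 !subrr enorm0; lra.
rewrite big_nat_recr // [X in _ - 2^-1 * X]big_nat_recr //= -/(gam n.+1).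
have := IHn (ltnW nT); have := adapeg_step_le _ nT.
lra.
Qed.

End AdaPEG.

Theorem lemmaB5 (R : realType) (d : nat) (X : set 'rV[R]_d) (Rd : R)
  (eta gamma0 : R) (T : nat) (g : nat -> 'rV[R]_d) (x z : nat -> 'rV[R]_d) :
  X !=set0 -> closed X -> convex_setX X -> bounded_set X ->
  (forall a b, X a -> X b -> enorm (a - b) <= Rd) ->
  0 <= gamma0 -> 0 < eta ->
  adapeg_run X eta gamma0 T g x z ->
  forall y, X y ->
    \sum_(1 <= t < T.+1) dotv (g t) (x t - y)
    <= 2^-1 * Rd ^+ 2 * gamma0
       + (2^-1 * (Rd ^+ 2 / eta) + 2 * eta)
         * Num.sqrt (\sum_(1 <= t < T.+1) enorm (g t - g t.-1) ^+ 2)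
       - 2^-1 * \sum_(1 <= t < T.+1) adapeg_gamma eta gamma0 g t.-1
             * (enorm (x t - z t.-1) ^+ 2 + enorm (x t.-1 - z t.-1) ^+ 2).
Proof.
(* Nonemptiness, closedness and boundedness of X only make the iterates exist. *)
move=> _ _ convX _ diamX gamma0_ge0 eta_gt0 run y Xy.
have [_ Xz0] := adapeg_iterates_in run 0 (leq0n T).
have := adapeg_regret_le convX diamX gamma0_ge0 eta_gt0 run y Xy T (leqnn T).
have gamT_ge0 := adapeg_gamma_ge0 eta gamma0 g eta_gt0 gamma0_ge0 T.
have := mulr_ge0 gamT_ge0 (sqr_ge0 (enorm (y - z T))).
have := mulr_ge0 gamT_ge0 (sqr_ge0 (enorm (x T - z T))).
have z0_le : gamma0 * enorm (y - z 0%N) ^+ 2 <= gamma0 * Rd ^+ 2.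
  by rewrite ler_wpM2l // (sqr_enorm_le_diam diamX).
have K_ge0 : 0 <= 2^-1 * Rd ^+ 2 + 2 * eta ^+ 2.
  by have := sqr_ge0 Rd; have := sqr_ge0 eta; lra.
have := ler_wpM2r K_ge0 (adapeg_gamma_sub_le eta gamma0 g eta_gt0 gamma0_ge0 T).
have -> r : r / eta * (2^-1 * Rd ^+ 2 + 2 * eta ^+ 2)
            = (2^-1 * (Rd ^+ 2 / eta) + 2 * eta) * r by field; rewrite gt_eqF.
lra.
Qed.
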